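(* Let $S$ be an inf-semilattice ordered Cu-semigroup and let $\alpha$ be an action of a finite group $G$ on $S$ by Cu-isomorphisms. Then the fixed-point set $S^\alpha:=\{x\in S:\alpha_g(x)=x\text{ for all }g\in G\}$ is a sub-Cu-semigroup of $S$. Moreover, if $S$ is weakly cancellative (respectively satisfies (O5), (O6), (O7)), then so is (respectively does) $S^\alpha$.
   Context: A Cu-semigroup is a positively ordered commutative monoid satisfying (O1)–(O4): increasing sequences have suprema; each element is the supremum of a $\ll$-increasing sequence; $x'\ll x,y'\ll y\Rightarrow x'+y'\ll x+y$; suprema of increasing sequences are additive. $x\ll y$: whenever $y\le\sup z_n$ for increasing $(z_n)$, $x\le z_m$ for some $m$. A Cu-isomorphism is a bijective monoid map which together with its inverse preserves order, suprema of increasing sequences and $\ll$. Inf-semilattice ordered: any two elements have an infimum $x\wedge y$ and $(x+z)\wedge(y+z)=(x\wedge y)+z$ for all $x,y,z$. Sub-Cu-semigroup: a submonoid that is a Cu-semigroup with the inherited order such that the inclusion preserves order, suprema of increasing sequences and $\ll$. Weakly cancellative: $x+z\ll y+z$ implies $x\ll y$. (O5): if $x+y\le z$, $x'\ll x$, $y'\ll y$ then some $c$ has $y'\ll c$ and $x'+c\le z\le x+c$. (O6): if $x'\ll x\le y+z$ then some $v,w$ have $v\le x,y$, $w\le x,z$, $x'\le v+w$. (O7): if $x'\ll x\le w$, $y'\ll y\le w$ then some $z$ has $x',y'\ll z\le w,x+y$. *)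

(* All Cu-notions are defined
   relative to a "domain" predicate D : T -> Prop, so that the same
   definitions express both S (D = all of T) and a sub-monoid of S with the
   inherited order (D = the subset). *)
From mathcomp Require Import all_boot fingroup.
Set Implicit Arguments. Unset Strict Implicit. Unset Printing Implicit Defensive.

Section CuDefs.
Variables (T : Type) (le : T -> T -> Prop) (add : T -> T -> T) (zero : T).

Definition fullD : T -> Prop := fun _ => True.

Section Rel.
Variable D : T -> Prop.

Definition incr_in (f : nat -> T) : Prop :=
  (forall n, D (f n)) /\ (forall n, le (f n) (f n.+1)).

Definition is_sup_in (f : nat -> T) (s : T) : Prop :=
  D s /\ (forall n, le (f n) s) /\
  (forall t, D t -> (forall n, le (f n) t) -> le s t).

Definition ll_in (x y : T) : Prop :=
  D x /\ D y /\
  forall (z : nat -> T) (s : T), incr_in z -> is_sup_in z s -> le y s ->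
    exists m, le x (z m).

Definition pom_in : Prop :=
  D zero /\ (forall x y, D x -> D y -> D (add x y)) /\
  (forall x, D x -> le x x) /\
  (forall x y, D x -> D y -> le x y -> le y x -> x = y) /\
  (forall x y z, D x -> D y -> D z -> le x y -> le y z -> le x z) /\
  (forall x y z, D x -> D y -> D z -> add (add x y) z = add x (add y z)) /\
  (forall x y, D x -> D y -> add x y = add y x) /\
  (forall x, D x -> add zero x = x) /\
  (forall x y z, D x -> D y -> D z -> le x y -> le (add x z) (add y z)) /\
  (forall x, D x -> le zero x).

Definition O1_in : Prop :=
  forall f, incr_in f -> exists s, is_sup_in f s.

Definition O2_in : Prop :=
  forall x, D x -> exists f : nat -> T,
    incr_in f /\ (forall n, ll_in (f n) (f n.+1)) /\ is_sup_in f x.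

Definition O3_in : Prop :=
  forall x' x y' y, ll_in x' x -> ll_in y' y -> ll_in (add x' y') (add x y).

Definition O4_in : Prop :=
  forall f g s t, incr_in f -> incr_in g -> is_sup_in f s -> is_sup_in g t ->
    is_sup_in (fun n => add (f n) (g n)) (add s t).

Definition is_Cu_in : Prop := [/\ pom_in, O1_in, O2_in, O3_in & O4_in].

Definition weakly_cancellative_in : Prop :=
  forall x y z, D x -> D y -> D z ->
    ll_in (add x z) (add y z) -> ll_in x y.

Definition O5_in : Prop :=
  forall x y z x' y', D x -> D y -> D z ->
    le (add x y) z -> ll_in x' x -> ll_in y' y ->
    exists c, D c /\ ll_in y' c /\ le (add x' c) z /\ le z (add x c).

Definition O6_in : Prop :=
  forall x' x y z, D y -> D z -> ll_in x' x -> le x (add y z) ->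
    exists v w, D v /\ D w /\ le v x /\ le v y /\ le w x /\ le w z /\
      le x' (add v w).

Definition O7_in : Prop :=
  forall x' x y' y w, D w -> ll_in x' x -> le x w -> ll_in y' y -> le y w ->
    exists z, D z /\ ll_in x' z /\ ll_in y' z /\ le z w /\ le z (add x y).

End Rel.

Definition is_Cu : Prop := is_Cu_in fullD.

Definition is_inf (x y i : T) : Prop :=
  le i x /\ le i y /\ (forall t, le t x -> le t y -> le t i).

Definition inf_semilattice_ordered : Prop :=
  (forall x y, exists i, is_inf x y i) /\
  (forall x y z i j, is_inf x y i -> is_inf (add x z) (add y z) j ->
     j = add i z).

Definition preserves_le_sup_ll (f : T -> T) : Prop :=
  [/\ (forall x y, le x y -> le (f x) (f y)),
      (forall u s, incr_in fullD u -> is_sup_in fullD u s ->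
          is_sup_in fullD (fun n => f (u n)) (f s)) &
      (forall x y, ll_in fullD x y -> ll_in fullD (f x) (f y)) ].

Definition Cu_iso (f : T -> T) : Prop :=
  f zero = zero /\ (forall x y, f (add x y) = add (f x) (f y)) /\
  exists g : T -> T, [/\ cancel f g, cancel g f,
     preserves_le_sup_ll f & preserves_le_sup_ll g].

(* P is a sub-Cu-semigroup of S: a submonoid which is a Cu-semigroup with the
   inherited order such that the inclusion preserves order (automatic),
   suprema of increasing sequences and << *)
Definition sub_Cu (P : T -> Prop) : Prop :=
  [/\ P zero, (forall x y, P x -> P y -> P (add x y)),
      is_Cu_in P,
      (forall u s, incr_in P u -> is_sup_in P u s -> is_sup_in fullD u s) &
      (forall x y, ll_in P x y -> ll_in fullD x y) ].

Definition fixed_points (gT : finGroupType) (alpha : gT -> T -> T) : T -> Prop :=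
  fun x => forall g : gT, alpha g x = x.

End CuDefs.

Definition Cu_action (T : Type) (le : T -> T -> Prop) (add : T -> T -> T)
  (zero : T) (gT : finGroupType) (alpha : gT -> T -> T) : Prop :=
  [/\ (forall x, alpha 1%g x = x),
      (forall g h x, alpha (g * h)%g x = alpha g (alpha h x)) &
      (forall g, Cu_iso le add zero (alpha g)) ].

(* P is clearly a submonoid, closed under finite infima, and the
   supremum in S of an increasing sequence of fixed points is fixed, so P
   has the suprema of S.  The key tool is the "orbit infimum"
   [orbit_meet x], the infimum of the finite orbit {alpha_g x | g in G}: it
   is a fixed point below x, monotone in x, and it commutes with adding a
   fixed element in the sense of [orbit_meet_glb_add].  Since G is finite,
   if a << y with y fixed and y <= sup z_n, then a <= alpha_g (z_n) for all
   g and all large n, hence a <= orbit_meet (z_n) ([ll_below_orbit_meet]).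
   From this we get that << computed in P agrees with << in S, and that
   every fixed point is the supremum of a <<-increasing sequence of fixed
   points obtained by applying [orbit_meet] to a subsequence of an
   approximating sequence in S; so P satisfies (O1)-(O4).  Finally each of
   weak cancellation, (O5), (O6), (O7) transfers from S to P by replacing
   the witness given in S by its orbit infimum or by a binary infimum of
   fixed points. *)
From Stdlib Require Import ClassicalEpsilon.
From mathcomp Require Import all_boot fingroup.
Set Implicit Arguments. Unset Strict Implicit. Unset Printing Implicit Defensive.

Section FixedPoints.
Variables (T : Type) (le : T -> T -> Prop) (add : T -> T -> T) (zero : T)
  (gT : finGroupType) (alpha : gT -> T -> T).

Local Notation F := (fullD (T:=T)).
Local Notation ll := (ll_in le F).
Local Notation P := (fixed_points alpha).

Hypothesis Hpom : pom_in le add zero F.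
Hypothesis Hinf : inf_semilattice_ordered le add.
Hypothesis Hact : Cu_action le add zero alpha.
Hypothesis HO1 : O1_in le F.
Hypothesis HO2 : O2_in le F.

Lemma le_refl x : le x x.
Proof. by case: Hpom => _ [_ [H _]]; apply: H. Qed.

Lemma le_anti x y : le x y -> le y x -> x = y.
Proof. by case: Hpom => _ [_ [_ [H _]]]; apply: H. Qed.

Lemma le_trans x y z : le x y -> le y z -> le x z.
Proof. by case: Hpom => _ [_ [_ [_ [H _]]]]; apply: H. Qed.

Lemma addC x y : add x y = add y x.
Proof. by case: Hpom => _ [_ [_ [_ [_ [_ [H _]]]]]]; apply: H. Qed.

Lemma add0 x : add zero x = x.
Proof. by case: Hpom => _ [_ [_ [_ [_ [_ [_ [H _]]]]]]]; apply: H. Qed.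

Lemma le_addr x y z : le x y -> le (add x z) (add y z).
Proof. by case: Hpom => _ [_ [_ [_ [_ [_ [_ [_ [H _]]]]]]]]; apply: H. Qed.

Lemma le_add2 a b c d : le a b -> le c d -> le (add a c) (add b d).
Proof.
move=> hab hcd; apply: le_trans (le_addr c hab) _.
by rewrite (addC b c) (addC b d); apply: le_addr.
Qed.

Lemma sup_uniq u s s' : is_sup_in le F u s -> is_sup_in le F u s' -> s = s'.
Proof.
by case=> _ [ub least] [_ [ub' least']]; apply: le_anti; [apply: least | apply: least'].
Qed.

Lemma sup_ext D f f' s :
  (forall n, f n = f' n) -> is_sup_in le D f s -> is_sup_in le D f' s.
Proof.
move=> eff' [Ds [ub least]]; split=> //; split=> [n|t Dt ubt]; first by rewrite -eff'.
by apply: least => // n; rewrite eff'.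
Qed.

Lemma incr_mono D u n k : incr_in le D u -> n <= k -> le (u n) (u k).
Proof.
move=> [_ uS] /subnK <-; elim: (k - n) => [|j IH]; first exact: le_refl.
by rewrite addSn; apply: le_trans IH (uS _).
Qed.

(* A constant sequence shows that << implies <=. *)
Lemma ll_le x y : ll x y -> le x y.
Proof.
case=> _ [_ llxy].
by have [m le_xy] := llxy (fun=> y) y (conj (fun=> I) (fun=> le_refl y))
  (conj I (conj (fun=> le_refl y) (fun t _ ubt => ubt 0))) (le_refl y).
Qed.

Lemma ll_trans a b c d : le a b -> ll b c -> le c d -> ll a d.
Proof.
move=> hab [_ [_ llbc]] hcd; do 2!split=> //.
move=> z s incr_z sup_s le_ds.
have [m hm] := llbc z s incr_z sup_s (le_trans hcd le_ds).
by exists m; apply: le_trans hab hm.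
Qed.

Lemma ll_sup f x :
  (forall n, ll (f n) (f n.+1)) -> is_sup_in le F f x -> forall k, ll (f k) x.
Proof. by move=> llf [_ [ub _]] k; apply: ll_trans (le_refl _) (llf k) (ub _). Qed.

Lemma act1 x : alpha 1 x = x. Proof. by case: Hact. Qed.

Lemma actM g h x : alpha (g * h) x = alpha g (alpha h x). Proof. by case: Hact. Qed.

Lemma act_invK g x : alpha g (alpha g^-1 x) = x.
Proof. by rewrite -actM mulgV act1. Qed.

Lemma act0 g : alpha g zero = zero.
Proof. by case: Hact => _ _ /(_ g) []. Qed.

Lemma actD g x y : alpha g (add x y) = add (alpha g x) (alpha g y).
Proof. by case: Hact => _ _ /(_ g) [_ []]. Qed.

Lemma act_le g x y : le x y -> le (alpha g x) (alpha g y).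
Proof. by case: Hact => _ _ /(_ g) [_ [_ [h [_ _ [H _ _] _]]]]; apply: H. Qed.

Lemma act_incr g u : incr_in le F u -> incr_in le F (fun n => alpha g (u n)).
Proof. by move=> [_ uS]; split=> // n; apply: act_le. Qed.

Lemma act_sup g u s : incr_in le F u -> is_sup_in le F u s ->
  is_sup_in le F (fun n => alpha g (u n)) (alpha g s).
Proof. by case: Hact => _ _ /(_ g) [_ [_ [h [_ _ [_ H _] _]]]]; apply: H. Qed.

Lemma fixed0 : P zero. Proof. exact: act0. Qed.

Lemma fixed_add x y : P x -> P y -> P (add x y).
Proof. by move=> Px Py g; rewrite actD Px Py. Qed.

Lemma fixed_of_le a : (forall g, le (alpha g a) a) -> P a.
Proof.
move=> ge_a g; apply: le_anti (ge_a g) _.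
by rewrite -{1}(act_invK g a); apply: act_le.
Qed.

Definition meet x y : T :=
  proj1_sig (constructive_indefinite_description _ (Hinf.1 x y)).

Lemma meetP x y : is_inf le x y (meet x y).
Proof. exact: proj2_sig (constructive_indefinite_description _ (Hinf.1 x y)). Qed.

Lemma meet_l x y : le (meet x y) x. Proof. exact: (meetP x y).1. Qed.

Lemma meet_r x y : le (meet x y) y. Proof. exact: (meetP x y).2.1. Qed.

Lemma meet_glb t x y : le t x -> le t y -> le t (meet x y).
Proof. exact: (meetP x y).2.2. Qed.

Lemma meet_addl x y z : meet (add z x) (add z y) = add z (meet x y).
Proof. by rewrite !(addC z); apply: Hinf.2 (meetP x y) (meetP _ _). Qed.

Lemma fixed_meet x y : P x -> P y -> P (meet x y).
Proof.
move=> Px Py; apply: fixed_of_le => g; apply: meet_glb.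
  by rewrite -{2}(Px g); apply/act_le/meet_l.
by rewrite -{2}(Py g); apply/act_le/meet_r.
Qed.

Definition meet_over (l : seq gT) x : T :=
  foldr (fun g acc => meet (alpha g x) acc) x l.

Definition orbit_meet x : T := meet_over (enum gT) x.

Lemma meet_over_lb l x g : g \in l -> le (meet_over l x) (alpha g x).
Proof.
elim: l => [|h l IH] //=; rewrite inE => /orP [/eqP ->|gl]; first exact: meet_l.
exact: le_trans (meet_r _ _) (IH gl).
Qed.

(* Lower bounds of the translates of c, shifted by x, stay below
   x + meet_over l c; this is where inf-semilattice ordering is used. *)
Lemma meet_over_glb_add l x c t : le t (add x c) ->
  (forall g, g \in l -> le t (add x (alpha g c))) -> le t (add x (meet_over l c)).
Proof.
move=> le_t_xc; elim: l => [|h l IH] //= glb.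
rewrite -meet_addl; apply: meet_glb; first by apply: glb; rewrite inE eqxx.
by apply: IH => g gl; apply: glb; rewrite inE gl orbT.
Qed.

Lemma orbit_meet_lb x g : le (orbit_meet x) (alpha g x).
Proof. by apply: meet_over_lb; rewrite mem_enum. Qed.

Lemma orbit_meet_le x : le (orbit_meet x) x.
Proof. by rewrite -{2}(act1 x); apply: orbit_meet_lb. Qed.

Lemma orbit_meet_glb_add x c t :
  (forall g, le t (add x (alpha g c))) -> le t (add x (orbit_meet c)).
Proof. by move=> glb; apply: meet_over_glb_add => [|g _] //; rewrite -(act1 c). Qed.

Lemma orbit_meet_glb x t : (forall g, le t (alpha g x)) -> le t (orbit_meet x).
Proof.
move=> glb; rewrite -(add0 t) -(add0 (orbit_meet x)).
by apply: orbit_meet_glb_add => g; rewrite !add0.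
Qed.

Lemma orbit_meet_fixed x : P (orbit_meet x).
Proof.
apply: fixed_of_le => h; apply: orbit_meet_glb => g.
have -> : alpha g x = alpha h (alpha (h^-1 * g) x) by rewrite -actM mulKVg.
by apply/act_le/orbit_meet_lb.
Qed.

Lemma orbit_meet_mono x y : le x y -> le (orbit_meet x) (orbit_meet y).
Proof.
move=> le_xy; apply: orbit_meet_glb => g.
exact: le_trans (orbit_meet_lb x g) (act_le g le_xy).
Qed.

Lemma fixed_le_orbit_meet a c : P a -> le a c -> le a (orbit_meet c).
Proof.
by move=> Pa le_ac; apply: orbit_meet_glb => g; rewrite -(Pa g); apply: act_le.
Qed.

Lemma eventually_all (Q : gT -> nat -> Prop) :
  (forall g n k, n <= k -> Q g n -> Q g k) -> (forall g, exists n, Q g n) ->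
  exists N, forall g, Q g N.
Proof.
move=> Qmono Qex.
suff [N HN] : exists N, forall g, g \in enum gT -> Q g N.
  by exists N => g; apply: HN; rewrite mem_enum.
elim: (enum gT) => [|h l [N IH]]; first by exists 0.
have [n Hn] := Qex h; exists (maxn n N) => g; rewrite inE => /orP [/eqP ->|gl].
  exact: Qmono (leq_maxl _ _) Hn.
exact: Qmono (leq_maxr _ _) (IH g gl).
Qed.

Lemma ll_below_orbit_meet a y z s : ll a y -> P y ->
  incr_in le F z -> is_sup_in le F z s -> le y s ->
  exists N, forall n, N <= n -> le a (orbit_meet (z n)).
Proof.
move=> [_ [_ lla]] Py incr_z sup_s le_ys.
have [N HN] : exists N, forall g, le a (alpha g (z N)).
  apply: (@eventually_all (fun g n => le a (alpha g (z n)))).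
    move=> g n k le_nk le_an; exact: le_trans le_an (act_le g (incr_mono incr_z le_nk)).
  move=> g; apply: lla (act_incr g incr_z) (act_sup g incr_z sup_s) _.
  by rewrite -(Py g); apply: act_le.
exists N => n le_Nn; apply: orbit_meet_glb => g.
exact: le_trans (HN g) (act_le g (incr_mono incr_z le_Nn)).
Qed.

Lemma incr_fixed_full u : incr_in le P u -> incr_in le F u.
Proof. by move=> [_ uS]; split. Qed.

Lemma fixed_sup_exists u : incr_in le P u -> exists s, is_sup_in le F u s /\ P s.
Proof.
move=> incr_u; have incr_uF := incr_fixed_full incr_u.
have [s sup_s] := HO1 incr_uF; exists s; split=> // g.
apply: sup_uniq (sup_ext _ (act_sup g incr_uF sup_s)) sup_s => n.
exact: incr_u.1 n g.
Qed.

Lemma sup_fixed_full u s :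
  incr_in le P u -> is_sup_in le P u s -> is_sup_in le F u s.
Proof.
move=> incr_u [Ps [ub least]]; have [s0 [sup_s0 Ps0]] := fixed_sup_exists incr_u.
have -> // : s = s0.
exact: le_anti (least s0 Ps0 sup_s0.2.1) (sup_s0.2.2 s I ub).
Qed.

Lemma sup_full_fixed u s :
  incr_in le P u -> is_sup_in le F u s -> is_sup_in le P u s.
Proof.
move=> incr_u sup_s; have [s0 [sup_s0 Ps0]] := fixed_sup_exists incr_u.
rewrite (sup_uniq sup_s sup_s0); case: sup_s0 => _ [ub least].
by do 2!split=> //; move=> t _; apply: least.
Qed.

Lemma ll_full_fixed x y : P x -> P y -> ll x y -> ll_in le P x y.
Proof.
move=> Px Py [_ [_ llxy]]; do 2!split=> //.
move=> z s incr_z sup_s.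
exact: llxy (incr_fixed_full incr_z) (sup_fixed_full incr_z sup_s).
Qed.

(* Given z with supremum above y, the orbit infima of z form an increasing
   sequence of fixed points whose supremum is still above y; so << in P
   yields << in S. *)
Lemma ll_fixed_full x y : ll_in le P x y -> ll x y.
Proof.
move=> [Px [Py llxy]]; do 2!split=> //; move=> z s incr_z sup_s le_ys.
pose w n := orbit_meet (z n).
have incr_w : incr_in le P w.
  by split=> n; [apply: orbit_meet_fixed | apply/orbit_meet_mono/incr_z.2].
have [W [sup_W _]] := fixed_sup_exists incr_w.
have le_yW : le y W.
  have [f [_ [llf sup_f]]] := HO2 (x := y) I.
  apply: sup_f.2.2 => // k.
  have [N HN] := ll_below_orbit_meet (ll_sup llf sup_f k) Py incr_z sup_s le_ys.
  exact: le_trans (HN N (leqnn N)) (sup_W.2.1 N).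
have [k Hk] := llxy w W incr_w (sup_full_fixed incr_w sup_W) le_yW.
by exists k; apply: le_trans Hk (orbit_meet_le _).
Qed.

(* Axiom (O2) for P: a fixed x is the supremum of the <<-increasing
   sequence of orbit infima of a suitable subsequence of a <<-increasing
   approximation f of x in S. *)

Lemma fixed_catchup x f : P x -> incr_in le F f ->
  (forall n, ll (f n) (f n.+1)) -> is_sup_in le F f x ->
  forall k, exists N, k <= N /\ le (f k) (orbit_meet (f N)).
Proof.
move=> Px incr_f llf sup_f k.
have [N HN] := ll_below_orbit_meet (ll_sup llf sup_f k) Px incr_f sup_f (le_refl x).
by exists (maxn N k); split; [apply: leq_maxr | apply/HN/leq_maxl].
Qed.

(* With phi chosen by [fixed_catchup], the subsequence of indices
   idx (i+1) = phi (idx i + 1) makes the orbit infima <<-increasing. *)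
Lemma O2_fixed : O2_in le P.
Proof.
move=> x Px; have [f [incr_f [llf sup_f]]] := HO2 (x := x) I.
have [phi Hphi] := ClassicalEpsilon.choice _ (fixed_catchup Px incr_f llf sup_f).
pose idx i := iter i (fun j => phi j.+1) 0.
have idx_ge i : i <= idx i.
  by elim: i => [|i IH] //=; apply: leq_trans (Hphi _).1.
pose y i := orbit_meet (f (idx i)).
have lly i : ll (y i) (y i.+1).
  exact: ll_trans (orbit_meet_le _) (llf (idx i)) (Hphi _).2.
have incr_y : incr_in le P y.
  by split=> i; [apply: orbit_meet_fixed | apply/ll_le/lly].
exists y; split=> //; split=> [i|].
  by apply: ll_full_fixed (lly i); apply: orbit_meet_fixed.
do 2!split=> //; first by move=> i; apply: le_trans (orbit_meet_le _) (sup_f.2.1 _).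
move=> t _ ubt; apply: sup_f.2.2 => // k.
apply: le_trans (incr_mono incr_f (leqW (idx_ge k))) _.
exact: le_trans (Hphi _).2 (ubt k.+1).
Qed.

Lemma ll_fixed_interpolate a b :
  ll_in le P a b -> exists c, P c /\ ll a c /\ ll c b.
Proof.
move=> llab; have [h [incr_h [llh sup_h]]] := O2_fixed llab.2.1.
have sup_hF := sup_fixed_full incr_h sup_h.
have [n Hn] := (ll_fixed_full llab).2.2 h b (incr_fixed_full incr_h) sup_hF (le_refl b).
exists (h n.+1); split; first exact: incr_h.1.
split; first exact: ll_trans Hn (ll_fixed_full (llh n)) (le_refl _).
exact: ll_sup (fun n => ll_fixed_full (llh n)) sup_hF _.
Qed.

(* The monoid and order laws hold on all of S, so on any submonoid. *)
Lemma pom_submonoid D : D zero -> (forall x y, D x -> D y -> D (add x y)) ->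
  pom_in le add zero D.
Proof.
case: Hpom => _ [_ [Hr [Ha [Ht [HA [HC [H0 [Hle H0le]]]]]]]] D0 Dadd.
do 2!split=> //.
split; first by move=> x _; apply: Hr.
split; first by move=> x y _ _; apply: Ha.
split; first by move=> x y z _ _ _; apply: Ht.
split; first by move=> x y z _ _ _; apply: HA.
split; first by move=> x y _ _; apply: HC.
split; first by move=> x _; apply: H0.
by split=> [x y z _ _ _|x _]; [apply: Hle | apply: H0le].
Qed.

Lemma sub_Cu_fixed : O3_in le add F -> O4_in le add F -> sub_Cu le add zero P.
Proof.
move=> HO3 HO4; split; [exact: fixed0 | exact: fixed_add | split | |].
- exact: pom_submonoid fixed0 fixed_add.
- move=> u incr_u; have [s [sup_s _]] := fixed_sup_exists incr_u.
  by exists s; apply: sup_full_fixed.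
- exact: O2_fixed.
- move=> x' x y' y llx lly.
  apply: ll_full_fixed (fixed_add llx.1 lly.1) (fixed_add llx.2.1 lly.2.1) _.
  exact: HO3 (ll_fixed_full llx) (ll_fixed_full lly).
- move=> f g s t incr_f incr_g sup_s sup_t.
  have incr_fg : incr_in le P (fun n => add (f n) (g n)).
    by split=> n; [apply: fixed_add; [apply: incr_f.1|apply: incr_g.1]
                  |apply: le_add2; [apply: incr_f.2|apply: incr_g.2]].
  apply: sup_full_fixed incr_fg _.
  exact: HO4 (incr_fixed_full incr_f) (incr_fixed_full incr_g)
    (sup_fixed_full incr_f sup_s) (sup_fixed_full incr_g sup_t).
- exact: sup_fixed_full.
- exact: ll_fixed_full.
Qed.

Lemma wc_fixed :
  weakly_cancellative_in le add F -> weakly_cancellative_in le add P.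
Proof.
move=> WC x y z Px Py Pz llxz; apply: ll_full_fixed Px Py _.
exact: WC (ll_fixed_full llxz).
Qed.

(* (O5) in P: interpolate y' << y'' << y with y'' fixed, apply (O5) in S
   to y'' and replace the witness c by its orbit infimum. *)
Lemma O5_fixed : O5_in le add F -> O5_in le add P.
Proof.
move=> HO5 x y z x' y' Px Py Pz le_xyz llx lly.
have [y'' [Py'' [lly'' lly''y]]] := ll_fixed_interpolate lly.
have [c [_ [llc [le_xcz le_zxc]]]] :=
  HO5 x y z x' y'' I I I le_xyz (ll_fixed_full llx) lly''y.
exists (orbit_meet c); split; first exact: orbit_meet_fixed.
split.
  apply: ll_full_fixed lly.1 (orbit_meet_fixed c) _.
  exact: ll_trans (le_refl _) lly'' (fixed_le_orbit_meet Py'' (ll_le llc)).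
split; first exact: le_trans (le_add2 (le_refl x') (orbit_meet_le c)) le_xcz.
by apply: orbit_meet_glb_add => g; rewrite -(Pz g) -(Px g) -actD; apply: act_le.
Qed.

(* (O6) in P: the infima x /\ y and x /\ z are fixed and dominate the
   witnesses given in S. *)
Lemma O6_fixed : O6_in le add F -> O6_in le add P.
Proof.
move=> HO6 x' x y z Py Pz llx le_xyz.
have [v [w [_ [_ [le_vx [le_vy [le_wx [le_wz le_x'vw]]]]]]]] :=
  HO6 x' x y z I I (ll_fixed_full llx) le_xyz.
have Px := llx.2.1.
exists (meet x y), (meet x z).
split; first exact: fixed_meet. split; first exact: fixed_meet.
split; first exact: meet_l. split; first exact: meet_r.
split; first exact: meet_l. split; first exact: meet_r.
exact: le_trans le_x'vw (le_add2 (meet_glb le_vx le_vy) (meet_glb le_wx le_wz)).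
Qed.

(* (O7) in P: the fixed point w /\ (x + y) dominates the witness in S. *)
Lemma O7_fixed : O7_in le add F -> O7_in le add P.
Proof.
move=> HO7 x' x y' y w Pw llx le_xw lly le_yw.
have [z [_ [llz1 [llz2 [le_zw le_zxy]]]]] :=
  HO7 x' x y' y w I (ll_fixed_full llx) le_xw (ll_fixed_full lly) le_yw.
have Pm : P (meet w (add x y)) := fixed_meet Pw (fixed_add llx.2.1 lly.2.1).
have le_zm := meet_glb le_zw le_zxy.
exists (meet w (add x y)); split=> //.
split; first exact: ll_full_fixed llx.1 Pm (ll_trans (le_refl _) llz1 le_zm).
split; first exact: ll_full_fixed lly.1 Pm (ll_trans (le_refl _) llz2 le_zm).
by split; [apply: meet_l | apply: meet_r].
Qed.

End FixedPoints.

Theorem lemma7p7 (T : Type) (le : T -> T -> Prop) (add : T -> T -> T)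
  (zero : T) (gT : finGroupType) (alpha : gT -> T -> T) :
  is_Cu le add zero ->
  inf_semilattice_ordered le add ->
  Cu_action le add zero alpha ->
  let P := fixed_points alpha in
  [/\ sub_Cu le add zero P,
      weakly_cancellative_in le add (fullD (T:=T)) ->
        weakly_cancellative_in le add P,
      O5_in le add (fullD (T:=T)) -> O5_in le add P,
      O6_in le add (fullD (T:=T)) -> O6_in le add P &
      O7_in le add (fullD (T:=T)) -> O7_in le add P].
Proof.
move=> [Hpom HO1 HO2 HO3 HO4] Hinf Hact P; split.
- exact: (sub_Cu_fixed Hpom Hinf Hact HO1 HO2 HO3 HO4).
- exact: (wc_fixed Hpom Hinf Hact HO1 HO2).
- exact: (O5_fixed Hpom Hinf Hact HO1 HO2).
- exact: (O6_fixed Hpom Hinf Hact HO1 HO2).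
- exact: (O7_fixed Hpom Hinf Hact HO1 HO2).
Qed.
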